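(* There is an absolute constant $C>0$ such that for every positive integer $d$ and all $\alpha,\beta\in[0,1]$ with $\alpha>\beta$, the $(\alpha,\beta,d,\ell)$-InnerProduct problem can be solved with space \[ \ell \le d\log_2\!\left(\frac{\sqrt{1-\beta}}{\alpha-\beta}\right)+C d . \]
   Context: $\mathbb{S}^{d-1}$ denotes the Euclidean unit sphere in $\mathbb{R}^d$, and $\langle x,y\rangle=\sum_{i=1}^d x_iy_i$. For positive integers $d,\ell$ and $\alpha,\beta\in[0,1]$ with $\alpha>\beta$, the $(\alpha,\beta,d,\ell)$-InnerProduct problem is to construct maps $\mathcal{E}:\mathbb{S}^{d-1}\to\{0,1\}^\ell$ and $\mathcal{D}:\{0,1\}^\ell\to\mathbb{S}^{d-1}$ and a threshold $t\in\mathbb{R}$ such that for all $x,y\in\mathbb{S}^{d-1}$: - if $\langle x,y\rangle\ge\alpha$ then $\langle \mathcal{D}(\mathcal{E}(x)),\mathcal{D}(\mathcal{E}(y))\rangle\ge t$; - if $\langle x,y\rangle\le\beta$ then $\langle \mathcal{D}(\mathcal{E}(x)),\mathcal{D}(\mathcal{E}(y))\rangle< t$. The problem is solved with space $\ell$ if such $\mathcal{E},\mathcal{D},t$ exist. *)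

From Stdlib Require Import Reals List.
Import ListNotations.
Open Scope R_scope.

Fixpoint inner (x y : list R) : R :=
  match x, y with
  | a :: xs, b :: ys => a * b + inner xs ys
  | _, _ => 0
  end.

Definition sphere (d : nat) : Type :=
  { x : list R | length x = d /\ inner x x = 1 }.

Definition bits (l : nat) : Type := { b : list bool | length b = l }.

Definition log2 (x : R) : R := ln x / ln 2.

Definition InnerProduct_solvable (alpha beta : R) (d l : nat) : Prop :=
  exists (E : sphere d -> bits l) (D : bits l -> sphere d) (t : R),
    forall x y : sphere d,
      (inner (proj1_sig x) (proj1_sig y) >= alpha ->
         inner (proj1_sig (D (E x))) (proj1_sig (D (E y))) >= t) /\
      (inner (proj1_sig x) (proj1_sig y) <= beta ->
         inner (proj1_sig (D (E x))) (proj1_sig (D (E y))) < t).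

From Stdlib Require Import Reals Lra Lia Psatz ZArith List ClassicalEpsilon.
Import ListNotations.
Open Scope R_scope.

(* Scale a unit vector x by c = sqrt d * K and round every coordinate down to an integer;
   the rounded point, divided by c and renormalized, lies within 2/K of x.  For
   K ~ 16 sqrt (1 - beta) / (alpha - beta) this perturbation is below a quarter of the gap
   sqrt (2 - 2 beta) - sqrt (2 - 2 alpha) between the distances of far and close pairs, so
   thresholding the decoded inner products at the midpoint distance separates them.  The
   integers z_i are stored with a Rice code of parameter B ~ log2 K, costing B + 2 bits plus
   |z_i| / 2^B unary bits each; since sum |z_i| <= c * |x|_1 + d <= d K + d, the unary parts
   take at most 3 d bits, for d (log2 K + 5) bits in total.  Decoding a bit string returns the
   quantization of any point that is encoded to it. *)

(** * Euclidean geometry of coordinate lists *)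

Fixpoint vsub (u v : list R) : list R :=
  match u, v with
  | a :: u', b :: v' => (a - b) :: vsub u' v'
  | _, _ => []
  end.

Definition scal (k : R) (u : list R) : list R := map (fun a => k * a) u.

Definition vnorm (u : list R) : R := sqrt (inner u u).

Definition vdist (u v : list R) : R := vnorm (vsub u v).

Lemma inner_comm u v : inner u v = inner v u.
Proof.
  revert v; induction u as [|a u IH]; intros [|b v]; simpl; try lra.
  rewrite IH; ring.
Qed.

Lemma inner_self_nonneg u : 0 <= inner u u.
Proof. induction u; simpl; nra. Qed.

Lemma length_vsub u v : length u = length v -> length (vsub u v) = length u.
Proof.
  revert v; induction u; intros [|b v]; simpl; intros; try lia.
  f_equal; apply IHu; lia.
Qed.

Lemma inner_vsub_l u v w :
  length u = length v -> inner (vsub u v) w = inner u w - inner v w.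
Proof.
  revert v w; induction u; intros [|b v] [|c w]; simpl; intros; try lia; try lra.
  rewrite IHu by lia; ring.
Qed.

Lemma inner_vsub_r u v w :
  length v = length w -> inner u (vsub v w) = inner u v - inner u w.
Proof.
  intros H. rewrite inner_comm, inner_vsub_l by exact H.
  rewrite !(inner_comm u); reflexivity.
Qed.

Lemma inner_scal_l k u w : inner (scal k u) w = k * inner u w.
Proof.
  revert w; induction u; intros [|c w]; simpl; try lra.
  rewrite IHu; ring.
Qed.

Lemma inner_scal_r k u w : inner u (scal k w) = k * inner u w.
Proof. rewrite inner_comm, inner_scal_l, inner_comm; reflexivity. Qed.

Lemma length_scal k u : length (scal k u) = length u.
Proof. apply length_map. Qed.

Lemma vsub_scal_r w k : vsub w (scal k w) = scal (1 - k) w.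
Proof. induction w; simpl; f_equal; auto; ring. Qed.

Lemma vsub_map_r u f : vsub u (map f u) = map (fun a => a - f a) u.
Proof. induction u; simpl; f_equal; auto. Qed.

Lemma vsub_zero_r u : vsub u (repeat 0 (length u)) = u.
Proof. induction u; simpl; f_equal; auto; ring. Qed.

Lemma quadratic_nonneg_discriminant A P V : 0 <= V ->
  (forall t, 0 <= A - 2 * t * P + t ^ 2 * V) -> P ^ 2 <= A * V.
Proof.
  intros HV H.
  destruct (Rle_lt_or_eq_dec _ _ HV) as [HVpos | <-].
  - specialize (H (P / V)).
    replace (A - 2 * (P / V) * P + (P / V) ^ 2 * V) with ((A * V - P ^ 2) / V) in H
      by (field; lra).
    apply (Rmult_le_compat_r V) in H; [|lra].
    unfold Rdiv in H. rewrite Rmult_assoc, Rinv_l, Rmult_0_l in H by lra. lra.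
  - destruct (Req_dec P 0) as [-> | HP]; [lra|].
    specialize (H ((A + 1) / (2 * P))).
    replace (A - 2 * ((A + 1) / (2 * P)) * P + ((A + 1) / (2 * P)) ^ 2 * 0) with (-1)
      in H by (field; auto).
    lra.
Qed.

Lemma cauchy_schwarz u v :
  length u = length v -> inner u v ^ 2 <= inner u u * inner v v.
Proof.
  intros Hl. apply quadratic_nonneg_discriminant; [apply inner_self_nonneg|].
  intros t. pose proof (inner_self_nonneg (vsub u (scal t v))) as H.
  rewrite inner_vsub_l, !inner_vsub_r, !inner_scal_l, !inner_scal_r,
    (inner_comm v u) in H by (rewrite ?length_vsub, ?length_scal; auto).
  lra.
Qed.

Lemma vnorm_nonneg u : 0 <= vnorm u.
Proof. apply sqrt_pos. Qed.

Lemma vnorm_sq u : vnorm u ^ 2 = inner u u.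
Proof. apply pow2_sqrt, inner_self_nonneg. Qed.

Lemma inner_le_vnorm_mul u v : length u = length v -> inner u v <= vnorm u * vnorm v.
Proof.
  intros Hl.
  pose proof (cauchy_schwarz u v Hl) as Hcs.
  rewrite <- (vnorm_sq u), <- (vnorm_sq v) in Hcs.
  pose proof (vnorm_nonneg u); pose proof (vnorm_nonneg v).
  destruct (Rle_lt_dec (inner u v) (vnorm u * vnorm v)) as [|Hgt]; [assumption|].
  assert (0 <= vnorm u * vnorm v) by nra.
  nra.
Qed.

Lemma inner_vsub_self u v : length u = length v ->
  inner (vsub u v) (vsub u v) = inner u u - 2 * inner u v + inner v v.
Proof.
  intros Hl.
  rewrite inner_vsub_l, !inner_vsub_r, (inner_comm v u) by (rewrite ?length_vsub; auto).
  ring.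
Qed.

Lemma vdist_comm u v : length u = length v -> vdist u v = vdist v u.
Proof.
  intros Hl. unfold vdist, vnorm.
  rewrite !inner_vsub_self, (inner_comm v u) by auto.
  f_equal; ring.
Qed.

Lemma vdist_triangle u v w : length u = length v -> length v = length w ->
  vdist u w <= vdist u v + vdist v w.
Proof.
  intros Huv Hvw. unfold vdist.
  set (a := vsub u v); set (b := vsub v w).
  assert (Hab : inner a b <= vnorm a * vnorm b).
  { apply inner_le_vnorm_mul. unfold a, b. rewrite !length_vsub; lia. }
  assert (Hsplit : inner (vsub u w) (vsub u w) = inner a a + 2 * inner a b + inner b b).
  { unfold a, b.
    rewrite !inner_vsub_self, inner_vsub_l, !inner_vsub_r by (rewrite ?length_vsub; lia).
    ring. }
  pose proof (vnorm_nonneg a); pose proof (vnorm_nonneg b).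
  unfold vnorm at 1. rewrite Hsplit, <- (vnorm_sq a), <- (vnorm_sq b).
  rewrite <- (sqrt_pow2 (vnorm a + vnorm b)) by lra.
  apply sqrt_le_1_alt. nra.
Qed.

Lemma vdist_zero_r u : vdist u (repeat 0 (length u)) = vnorm u.
Proof. unfold vdist. rewrite vsub_zero_r. reflexivity. Qed.

Lemma vdist_unit_sq u v : length u = length v -> inner u u = 1 -> inner v v = 1 ->
  vdist u v ^ 2 = 2 - 2 * inner u v.
Proof.
  intros Hl Hu Hv. unfold vdist. rewrite vnorm_sq, inner_vsub_self, Hu, Hv by auto.
  ring.
Qed.

Lemma vnorm_scal k u : vnorm (scal k u) = Rabs k * vnorm u.
Proof.
  unfold vnorm. rewrite inner_scal_l, inner_scal_r, <- Rmult_assoc.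
  rewrite sqrt_mult by (nra || apply inner_self_nonneg).
  f_equal. apply sqrt_Rsqr_abs.
Qed.

Definition normalize (w : list R) : list R := scal (/ vnorm w) w.

Lemma normalize_close x w eta :
  length x = length w -> inner x x = 1 -> vdist x w <= eta -> eta < 1 ->
  length (normalize w) = length w /\ inner (normalize w) (normalize w) = 1 /\
  vdist x (normalize w) <= 2 * eta.
Proof.
  intros Hl Hx Hd He.
  set (n := vnorm w).
  assert (Hx1 : vnorm x = 1) by (unfold vnorm; rewrite Hx; apply sqrt_1).
  assert (Hn_near : - eta <= n - 1 <= eta).
  { assert (T1 : vdist w (repeat 0 (length w))
                 <= vdist w x + vdist x (repeat 0 (length w)))
      by (apply vdist_triangle; rewrite ?repeat_length; auto).
    assert (T2 : vdist x (repeat 0 (length w))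
                 <= vdist x w + vdist w (repeat 0 (length w)))
      by (apply vdist_triangle; rewrite ?repeat_length; auto).
    rewrite <- Hl, vdist_zero_r, Hl, vdist_zero_r in T1, T2.
    rewrite vdist_comm in T1 by auto.
    fold n in T1, T2. lra. }
  assert (Hn : 0 < n) by lra.
  split; [apply length_scal | split].
  - unfold normalize. rewrite inner_scal_l, inner_scal_r, <- (vnorm_sq w). fold n.
    field. lra.
  - assert (Hw : vdist w (normalize w) = Rabs (n - 1)).
    { unfold vdist, normalize. rewrite vsub_scal_r, vnorm_scal. fold n.
      replace (n - 1) with ((1 - / n) * n) by (field; lra).
      rewrite Rabs_mult, (Rabs_pos_eq n) by lra. reflexivity. }
    pose proof (vdist_triangle x w (normalize w) Hl (eq_sym (length_scal _ _))).
    pose proof (Rabs_le _ _ Hn_near). lra.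
Qed.

(** * Rounding to a scaled integer grid *)

Definition round (c : R) (x : list R) : list Z := map (fun a => Int_part (c * a)) x.

Definition grid (c : R) (zs : list Z) : list R := map (fun z => IZR z / c) zs.

Definition quantize (c : R) (x : list R) : list R := normalize (grid c (round c x)).

Lemma vdist_map_le x f e :
  (forall a, Rabs (a - f a) <= e) -> vdist x (map f x) <= sqrt (INR (length x)) * e.
Proof.
  intros Hf.
  assert (He : 0 <= e) by (specialize (Hf 0); pose proof (Rabs_pos (0 - f 0)); lra).
  assert (Hsum : inner (map (fun a => a - f a) x) (map (fun a => a - f a) x)
                 <= INR (length x) * e ^ 2).
  { induction x as [|a x IH]; simpl inner; simpl length; [simpl; lra|].
    rewrite S_INR. specialize (Hf a).
    assert (Hsq : Rabs (a - f a) ^ 2 <= e ^ 2) by (pose proof (Rabs_pos (a - f a)); nra).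
    rewrite pow2_abs in Hsq. lra. }
  unfold vdist, vnorm. rewrite vsub_map_r, <- (sqrt_pow2 e He), <- sqrt_mult
    by (apply pos_INR || apply pow2_ge_0).
  apply sqrt_le_1_alt. exact Hsum.
Qed.

Lemma vdist_grid_round c x : 0 < c ->
  vdist x (grid c (round c x)) <= sqrt (INR (length x)) / c.
Proof.
  intros Hc. unfold grid, round. rewrite map_map.
  apply vdist_map_le. intros a.
  destruct (base_Int_part (c * a)) as [Hlo Hhi].
  replace (a - IZR (Int_part (c * a)) / c) with ((c * a - IZR (Int_part (c * a))) / c)
    by (field; lra).
  rewrite Rabs_pos_eq.
  - apply Rmult_le_reg_l with c; [exact Hc|].
    replace (c * ((c * a - IZR (Int_part (c * a))) / c)) with (c * a - IZR (Int_part (c * a)))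
      by (field; lra).
    rewrite Rinv_r; lra.
  - apply Rmult_le_pos; [lra | left; apply Rinv_0_lt_compat, Hc].
Qed.

Lemma length_grid_round c x : length (grid c (round c x)) = length x.
Proof. unfold grid, round. rewrite !length_map. reflexivity. Qed.

Lemma quantize_close c x : sqrt (INR (length x)) < c -> inner x x = 1 ->
  length (quantize c x) = length x /\ inner (quantize c x) (quantize c x) = 1 /\
  vdist x (quantize c x) <= 2 * (sqrt (INR (length x)) / c).
Proof.
  intros Hc Hx.
  assert (Hc0 : 0 < c) by (pose proof (sqrt_pos (INR (length x))); lra).
  destruct (normalize_close x (grid c (round c x)) (sqrt (INR (length x)) / c))
    as [Hl [Hu Hd]].
  - symmetry; apply length_grid_round.
  - exact Hx.
  - apply vdist_grid_round, Hc0.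
  - apply Rmult_lt_reg_r with c; [exact Hc0|]. field_simplify; lra.
  - unfold quantize. rewrite Hl, length_grid_round. auto.
Qed.

Fixpoint norm1 (x : list R) : R :=
  match x with
  | [] => 0
  | a :: x' => Rabs a + norm1 x'
  end.

Lemma norm1_nonneg x : 0 <= norm1 x.
Proof. induction x; simpl; [lra|]. pose proof (Rabs_pos a); lra. Qed.

Lemma norm1_eq_inner_ones x : norm1 x = inner (map Rabs x) (repeat 1 (length x)).
Proof. induction x; simpl; [reflexivity|]. rewrite IHx; ring. Qed.

Lemma inner_map_Rabs x : inner (map Rabs x) (map Rabs x) = inner x x.
Proof.
  induction x; simpl; [reflexivity|].
  rewrite IHx, <- Rabs_mult, Rabs_pos_eq; [reflexivity | apply Rle_0_sqr].
Qed.

Lemma inner_repeat_one n : inner (repeat 1 n) (repeat 1 n) = INR n.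
Proof. induction n; [reflexivity|]. cbn [repeat inner]. rewrite IHn, S_INR; ring. Qed.

Lemma norm1_le_sqrt x : norm1 x <= sqrt (INR (length x) * inner x x).
Proof.
  pose proof (cauchy_schwarz (map Rabs x) (repeat 1 (length x))) as Hcs.
  rewrite <- norm1_eq_inner_ones, inner_map_Rabs, inner_repeat_one,
    length_map, repeat_length in Hcs.
  specialize (Hcs eq_refl).
  rewrite <- (sqrt_pow2 (norm1 x)) by apply norm1_nonneg.
  apply sqrt_le_1_alt. lra.
Qed.

Lemma Int_part_abs_le r : Rabs (IZR (Int_part r)) <= Rabs r + 1.
Proof.
  destruct (base_Int_part r).
  unfold Rabs; destruct (Rcase_abs (IZR (Int_part r))), (Rcase_abs r); lra.
Qed.

Lemma norm1_round c x : 0 <= c ->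
  norm1 (map IZR (round c x)) <= c * norm1 x + INR (length x).
Proof.
  intros Hc. unfold round.
  induction x as [|a x IH]; cbn [map norm1 length]; [simpl; lra|].
  rewrite S_INR.
  pose proof (Int_part_abs_le (c * a)) as Ha.
  rewrite Rabs_mult, (Rabs_pos_eq c Hc) in Ha.
  lra.
Qed.

(** * Rice codes *)

Fixpoint bits_of_nat (B n : nat) : list bool :=
  match B with
  | O => []
  | S B' => Nat.odd n :: bits_of_nat B' (Nat.div2 n)
  end.

Fixpoint nat_of_bits (s : list bool) : nat :=
  match s with
  | [] => 0%nat
  | b :: s' => (Nat.b2n b + 2 * nat_of_bits s')%nat
  end.

Lemma length_bits_of_nat B n : length (bits_of_nat B n) = B.
Proof. revert n; induction B; simpl; auto. Qed.

Lemma nat_of_bits_of_nat B n : (n < 2 ^ B)%nat -> nat_of_bits (bits_of_nat B n) = n.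
Proof.
  revert n; induction B; simpl; intros n Hn; [lia|].
  pose proof (Nat.div2_odd n). rewrite IHB; lia.
Qed.

Lemma app_inj_length {A : Type} (l1 l2 r1 r2 : list A) :
  length l1 = length l2 -> l1 ++ r1 = l2 ++ r2 -> l1 = l2 /\ r1 = r2.
Proof.
  revert l2; induction l1; intros [|b l2]; simpl; intros Hl H; try lia; auto.
  injection H as -> H. destruct (IHl1 l2) as [-> ->]; auto.
Qed.

Lemma unary_app_inj q q' r r' :
  repeat true q ++ false :: r = repeat true q' ++ false :: r' -> q = q' /\ r = r'.
Proof.
  revert q'; induction q; intros [|q']; simpl; intros H; inversion H; auto.
  destruct (IHq q') as [-> ->]; auto.
Qed.

Definition rice (B : nat) (z : Z) : list bool :=
  Z.ltb z 0 :: bits_of_nat B (Z.abs_nat z mod 2 ^ B)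
    ++ repeat true (Z.abs_nat z / 2 ^ B) ++ [false].

Lemma length_rice B z : length (rice B z) = (B + 2 + Z.abs_nat z / 2 ^ B)%nat.
Proof.
  unfold rice. simpl. rewrite !length_app, length_bits_of_nat, repeat_length. simpl. lia.
Qed.

Lemma rice_app_inj B z z' r r' : rice B z ++ r = rice B z' ++ r' -> z = z' /\ r = r'.
Proof.
  unfold rice. simpl. intros H. injection H as Hsign H.
  rewrite <- !app_assoc in H.
  apply app_inj_length in H; [|rewrite !length_bits_of_nat; reflexivity].
  destruct H as [Hlow H]. apply unary_app_inj in H. destruct H as [Hhigh ->].
  split; [|reflexivity].
  assert (HP : (2 ^ B <> 0)%nat) by (apply Nat.pow_nonzero; lia).
  apply (f_equal nat_of_bits) in Hlow.
  rewrite !nat_of_bits_of_nat in Hlow by (apply Nat.mod_upper_bound; exact HP).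
  assert (Habs : Z.abs_nat z = Z.abs_nat z').
  { rewrite (Nat.div_mod_eq (Z.abs_nat z) (2 ^ B)), (Nat.div_mod_eq (Z.abs_nat z') (2 ^ B)).
    lia. }
  apply (f_equal Z.of_nat) in Habs. rewrite !Zabs2Nat.id_abs in Habs.
  destruct (Z.ltb_spec z 0), (Z.ltb_spec z' 0); try discriminate; lia.
Qed.

Fixpoint rice_seq (B : nat) (zs : list Z) : list bool :=
  match zs with
  | [] => []
  | z :: zs' => rice B z ++ rice_seq B zs'
  end.

Lemma rice_seq_app_inj B zs zs' r r' : length zs = length zs' ->
  rice_seq B zs ++ r = rice_seq B zs' ++ r' -> zs = zs'.
Proof.
  revert zs' r r'; induction zs; intros [|z' zs'] r r'; cbn [rice_seq length]; intros Hl H;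
    try lia; auto.
  rewrite <- !app_assoc in H. apply rice_app_inj in H. destruct H as [-> H].
  f_equal. apply (IHzs zs' r r'); auto.
Qed.

Definition pad (l : nat) (s : list bool) : bits l.
Proof.
  exists (firstn l s ++ repeat false (l - length s)).
  rewrite length_app, length_firstn, repeat_length. lia.
Defined.

Lemma pad_val l s : (length s <= l)%nat ->
  proj1_sig (pad l s) = s ++ repeat false (l - length s).
Proof. intros H. simpl. rewrite firstn_all2 by exact H. reflexivity. Qed.

Lemma pad_rice_seq_inj l B zs zs' :
  length zs = length zs' ->
  (length (rice_seq B zs) <= l)%nat -> (length (rice_seq B zs') <= l)%nat ->
  pad l (rice_seq B zs) = pad l (rice_seq B zs') -> zs = zs'.
Proof.
  intros Hl H1 H2 H. apply (f_equal (@proj1_sig _ _)) in H.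
  rewrite !pad_val in H by assumption.
  exact (rice_seq_app_inj _ _ _ _ _ Hl H).
Qed.

Lemma INR_div_le n P : (P <> 0)%nat -> INR (n / P) <= INR n / INR P.
Proof.
  intros HP. pose proof (le_INR _ _ (Nat.Div0.mul_div_le n P)) as H.
  rewrite mult_INR in H.
  assert (0 < INR P) by (apply lt_0_INR; lia).
  apply Rmult_le_reg_l with (INR P); [assumption|].
  replace (INR P * (INR n / INR P)) with (INR n) by (field; lra). exact H.
Qed.

Lemma length_rice_seq_le B zs :
  INR (length (rice_seq B zs)) <= INR (length zs) * (INR B + 2) + norm1 (map IZR zs) / 2 ^ B.
Proof.
  assert (HP : INR (2 ^ B) = 2 ^ B) by (rewrite pow_INR; reflexivity).
  induction zs as [|z zs IH]; cbn [rice_seq map norm1 length]; [simpl; lra|].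
  rewrite length_app, length_rice, !plus_INR, (S_INR (length zs)).
  pose proof (INR_div_le (Z.abs_nat z) (2 ^ B) (Nat.pow_nonzero 2 B ltac:(lia))) as Hdiv.
  rewrite HP, (INR_IZR_INZ (Z.abs_nat z)), Zabs2Nat.id_abs, abs_IZR in Hdiv.
  replace (INR 2) with 2 by (simpl; lra).
  unfold Rdiv in *. rewrite Rmult_plus_distr_r. lra.
Qed.

Lemma length_round c x : length (round c x) = length x.
Proof. apply length_map. Qed.

Lemma length_rice_seq_round B K x : 0 <= K < 2 * 2 ^ B -> inner x x = 1 ->
  (length (rice_seq B (round (sqrt (INR (length x)) * K) x)) <= length x * (B + 5))%nat.
Proof.
  intros [HK0 HK] Hx.
  set (d := INR (length x)). set (s := sqrt d).
  assert (Hd : 0 <= d) by apply pos_INR.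
  assert (Hs : 0 <= s) by apply sqrt_pos.
  assert (Hss : s * s = d) by (apply sqrt_sqrt, Hd).
  assert (HP : 1 <= 2 ^ B) by (apply pow_R1_Rle; lra).
  assert (Hx1 : norm1 x <= s).
  { pose proof (norm1_le_sqrt x) as H. rewrite Hx, Rmult_1_r in H. exact H. }
  assert (Hr : norm1 (map IZR (round (s * K) x)) <= K * d + d).
  { pose proof (norm1_round (s * K) x ltac:(nra)) as H. fold d in H.
    assert (s * K * norm1 x <= s * K * s) by (apply Rmult_le_compat_l; nra).
    nra. }
  assert (Hq : norm1 (map IZR (round (s * K) x)) / 2 ^ B <= 3 * d).
  { apply Rmult_le_reg_l with (2 ^ B); [lra|].
    replace (2 ^ B * (norm1 (map IZR (round (s * K) x)) / 2 ^ B))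
      with (norm1 (map IZR (round (s * K) x))) by (field; lra).
    nra. }
  pose proof (length_rice_seq_le B (round (s * K) x)) as H.
  rewrite length_round in H. fold d in H.
  apply INR_le. rewrite mult_INR, plus_INR. fold d.
  replace (INR 5) with 5 by (simpl; lra).
  lra.
Qed.

(** * Thresholding perturbed inner products *)

Lemma vdist_perturb x y x' y' :
  length x = length y -> length x' = length x -> length y' = length y ->
  vdist x' y' <= vdist x x' + vdist x y + vdist y y'.
Proof.
  intros Hxy Hx Hy.
  assert (H1 : vdist x' y' <= vdist x' x + vdist x y') by (apply vdist_triangle; lia).
  assert (H2 : vdist x y' <= vdist x y + vdist y y') by (apply vdist_triangle; lia).
  rewrite (vdist_comm x' x) in H1 by lia. lra.
Qed.

(* The threshold is the inner product of two unit vectors whose distance is the midpoint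
   of the distances sqrt (2 - 2 alpha) and sqrt (2 - 2 beta). *)
Definition threshold (alpha beta : R) : R :=
  1 - ((sqrt (2 - 2 * alpha) + sqrt (2 - 2 * beta)) / 2) ^ 2 / 2.

Lemma threshold_separates alpha beta e x y x' y' :
  alpha <= 1 -> beta <= 1 ->
  4 * e < sqrt (2 - 2 * beta) - sqrt (2 - 2 * alpha) ->
  length x = length y -> length x' = length x -> length y' = length y ->
  inner x x = 1 -> inner y y = 1 -> inner x' x' = 1 -> inner y' y' = 1 ->
  vdist x x' <= e -> vdist y y' <= e ->
  (inner x y >= alpha -> inner x' y' >= threshold alpha beta) /\
  (inner x y <= beta -> inner x' y' < threshold alpha beta).
Proof.
  intros Ha Hb Hgap Hxy Hx Hy Nx Ny Nx' Ny' Dx Dy.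
  unfold threshold.
  set (a := sqrt (2 - 2 * alpha)) in *. set (b := sqrt (2 - 2 * beta)) in *.
  set (T := (a + b) / 2).
  assert (Ha0 : 0 <= a) by apply sqrt_pos.
  pose proof (vdist_unit_sq x y Hxy Nx Ny) as Exy.
  pose proof (vdist_unit_sq x' y' ltac:(lia) Nx' Ny') as Exy'.
  pose proof (vdist_perturb x y x' y' Hxy Hx Hy) as P1.
  pose proof (vdist_perturb x' y' x y ltac:(lia) (eq_sym Hx) (eq_sym Hy)) as P2.
  rewrite (vdist_comm x' x), (vdist_comm y' y) in P2 by lia.
  assert (Hd : 0 <= vdist x y) by apply vnorm_nonneg.
  assert (Hd' : 0 <= vdist x' y') by apply vnorm_nonneg.
  split; intros Hp.
  - assert (vdist x y <= a).
    { unfold a. rewrite <- (sqrt_pow2 (vdist x y) Hd). apply sqrt_le_1_alt. lra. }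
    assert (vdist x' y' < T) by (unfold T; lra).
    assert (vdist x' y' ^ 2 <= T ^ 2) by nra.
    lra.
  - assert (b <= vdist x y).
    { unfold b. rewrite <- (sqrt_pow2 (vdist x y) Hd). apply sqrt_le_1_alt. lra. }
    assert (T < vdist x' y') by (unfold T; lra).
    assert (T ^ 2 < vdist x' y' ^ 2) by (unfold T in *; nra).
    lra.
Qed.

Lemma sqrt_gap alpha beta : 0 <= beta < alpha -> alpha <= 1 ->
  (alpha - beta) / (2 * sqrt (1 - beta)) < sqrt (2 - 2 * beta) - sqrt (2 - 2 * alpha).
Proof.
  intros Hb Ha.
  set (s := sqrt (1 - beta)); set (a := sqrt (2 - 2 * alpha)); set (b := sqrt (2 - 2 * beta)).
  assert (Hs : 0 < s) by (apply sqrt_lt_R0; lra).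
  assert (Hss : s * s = 1 - beta) by (apply sqrt_sqrt; lra).
  assert (Ha0 : 0 <= a) by apply sqrt_pos. assert (Hb0 : 0 <= b) by apply sqrt_pos.
  assert (Haa : a * a = 2 - 2 * alpha) by (apply sqrt_sqrt; lra).
  assert (Hbb : b * b = 2 - 2 * beta) by (apply sqrt_sqrt; lra).
  assert (Hab : a < b) by nra.
  assert (Hb2 : b <= 2 * s) by nra.
  apply Rmult_lt_reg_l with (2 * s); [lra|].
  replace (2 * s * ((alpha - beta) / (2 * s))) with (alpha - beta) by (field; lra).
  nra.
Qed.

(** * Encoding the sphere *)

Lemma solvable_of_lossy_code alpha beta d l t (Q : sphere d -> sphere d) (E : sphere d -> bits l) :
  inhabited (sphere d) ->
  (forall x y, E x = E y -> proj1_sig (Q x) = proj1_sig (Q y)) ->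
  (forall x y : sphere d,
     (inner (proj1_sig x) (proj1_sig y) >= alpha ->
        inner (proj1_sig (Q x)) (proj1_sig (Q y)) >= t) /\
     (inner (proj1_sig x) (proj1_sig y) <= beta ->
        inner (proj1_sig (Q x)) (proj1_sig (Q y)) < t)) ->
  InnerProduct_solvable alpha beta d l.
Proof.
  intros inh HE Hsep.
  exists E, (fun b => Q (epsilon inh (fun x => E x = b))), t.
  assert (HDE : forall x, proj1_sig (Q (epsilon inh (fun z => E z = E x))) = proj1_sig (Q x)).
  { intros x. apply HE, (epsilon_spec inh (fun z => E z = E x)). exists x; reflexivity. }
  intros x y. rewrite !HDE. apply Hsep.
Qed.

Lemma sphere_inhabited d : (1 <= d)%nat -> inhabited (sphere d).
Proof.
  intros Hd. constructor. exists (1 :: repeat 0 (d - 1)). split.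
  - simpl. rewrite repeat_length. lia.
  - assert (H0 : forall n, inner (repeat 0 n) (repeat 0 n) = 0)
      by (induction n; simpl; lra).
    simpl. rewrite H0. ring.
Qed.

Lemma quantize_in_sphere d c (Hc : sqrt (INR d) < c) (x : sphere d) :
  length (quantize c (proj1_sig x)) = d /\
  inner (quantize c (proj1_sig x)) (quantize c (proj1_sig x)) = 1.
Proof.
  destruct x as [x [<- Hx]]. simpl.
  destruct (quantize_close c x Hc Hx) as [Hl [Hu _]]. auto.
Qed.

Definition quantize_sphere d c (Hc : sqrt (INR d) < c) (x : sphere d) : sphere d :=
  exist _ (quantize c (proj1_sig x)) (quantize_in_sphere d c Hc x).

Lemma solvable_by_rice_quantizer alpha beta d B K :
  (1 <= d)%nat -> alpha <= 1 -> beta <= 1 -> 1 < K < 2 * 2 ^ B ->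
  8 / K < sqrt (2 - 2 * beta) - sqrt (2 - 2 * alpha) ->
  InnerProduct_solvable alpha beta d (d * (B + 5)).
Proof.
  intros Hd Ha Hb [HK1 HK2] Hgap.
  set (c := sqrt (INR d) * K).
  assert (Hsd : 0 < sqrt (INR d)) by (apply sqrt_lt_R0, lt_0_INR; lia).
  assert (Hc : sqrt (INR d) < c) by (unfold c; nra).
  assert (Hlen : forall x : sphere d,
             (length (rice_seq B (round c (proj1_sig x))) <= d * (B + 5))%nat).
  { intros [x [<- Hx]]. apply length_rice_seq_round; [lra | exact Hx]. }
  apply (solvable_of_lossy_code alpha beta d (d * (B + 5)) (threshold alpha beta)
           (quantize_sphere d c Hc) (fun x => pad _ (rice_seq B (round c (proj1_sig x))))).
  - apply sphere_inhabited, Hd.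
  - intros x y Hxy. simpl. unfold quantize. f_equal. f_equal.
    apply (pad_rice_seq_inj (d * (B + 5)) B); auto.
    rewrite !length_round. destruct (proj2_sig x), (proj2_sig y). lia.
  - intros [x [Hx Nx]] [y [Hy Ny]]. simpl.
    subst d.
    destruct (quantize_close c x Hc Nx) as [Lx' [Nx' Dx]].
    destruct (quantize_close c y (ltac:(rewrite Hy; exact Hc)) Ny) as [Ly' [Ny' Dy]].
    rewrite Hy in Dy.
    replace (2 * (sqrt (INR (length x)) / c)) with (2 / K) in Dx, Dy by (unfold c; field; lra).
    apply (threshold_separates alpha beta (2 / K)); auto; lra.
Qed.

Lemma exists_pow2_bracket K : 1 <= K -> exists B : nat, 2 ^ B <= K < 2 * 2 ^ B.
Proof.
  intros HK.
  assert (Hbig : exists N, K < 2 ^ N).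
  { destruct (archimed K) as [Hup _].
    assert (Hu : (0 <= up K)%Z) by (apply le_IZR; lra).
    exists (Z.to_nat (up K)).
    assert (Hpow : forall n, INR n + 1 <= 2 ^ n).
    { induction n; [simpl; lra|]. rewrite S_INR. simpl. pose proof (pos_INR n). lra. }
    specialize (Hpow (Z.to_nat (up K))).
    rewrite INR_IZR_INZ, Z2Nat.id in Hpow by exact Hu. lra. }
  destruct Hbig as [N HN]. induction N as [|N IH].
  - simpl in HN. lra.
  - destruct (Rlt_le_dec K (2 ^ N)) as [Hlt | Hle]; [exact (IH Hlt)|].
    exists N. simpl in HN. lra.
Qed.

Lemma INR_le_log2 B K : 2 ^ B <= K -> INR B <= log2 K.
Proof.
  intros HB. unfold log2.
  assert (Hln2 : 0 < ln 2) by (pose proof ln_lt_2; lra).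
  apply Rmult_le_reg_r with (ln 2); [exact Hln2|].
  replace (ln K / ln 2 * ln 2) with (ln K) by (field; lra).
  rewrite <- ln_pow by lra.
  destruct HB as [Hlt | ->]; [left; apply ln_increasing; auto; apply pow_lt; lra | lra].
Qed.

Lemma log2_mul_16 x : 0 < x -> log2 (16 * x) = 4 + log2 x.
Proof.
  intros Hx. unfold log2.
  assert (Hln2 : 0 < ln 2) by (pose proof ln_lt_2; lra).
  replace 16 with (2 ^ 4) by (simpl; lra).
  rewrite ln_mult, ln_pow by (simpl; lra).
  simpl INR. field. lra.
Qed.

Theorem mainTheorem1 :
  exists C : R, 0 < C /\
    forall (d : nat), (1 <= d)%nat ->
    forall alpha beta : R,
      0 <= alpha <= 1 -> 0 <= beta <= 1 -> alpha > beta ->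
      exists l : nat,
        INR l <= INR d * log2 (sqrt (1 - beta) / (alpha - beta)) + C * INR d /\
        InnerProduct_solvable alpha beta d l.
Proof.
  exists 9. split; [lra|].
  intros d Hd alpha beta Ha Hb Hab.
  set (s := sqrt (1 - beta)).
  assert (Hs : 0 < s) by (apply sqrt_lt_R0; lra).
  assert (Hss : s * s = 1 - beta) by (apply sqrt_sqrt; lra).
  set (r := s / (alpha - beta)).
  assert (Hr : 1 <= r).
  { apply Rmult_le_reg_l with (alpha - beta); [lra|].
    unfold r. replace ((alpha - beta) * (s / (alpha - beta))) with s by (field; lra). nra. }
  destruct (exists_pow2_bracket (16 * r)) as [B HB]; [lra|].
  exists (d * (B + 5))%nat. split.
  - pose proof (INR_le_log2 B (16 * r) (proj1 HB)) as HBlog.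
    rewrite log2_mul_16 in HBlog by lra.
    rewrite mult_INR, plus_INR. replace (INR 5) with 5 by (simpl; lra).
    pose proof (pos_INR d). nra.
  - apply (solvable_by_rice_quantizer alpha beta d B (16 * r)); try lra; auto.
    replace (8 / (16 * r)) with ((alpha - beta) / (2 * s)) by (unfold r; field; lra).
    apply sqrt_gap; lra.
Qed.
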